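(* Let $k$ be a field of characteristic $\neq 2$ and let $\mathfrak g_\boxtimes$ be the Tetrahedron algebra over $k$. Let $\Omega$ (respectively $\Omega'$, $\Omega''$) be the subalgebra of $\mathfrak g_\boxtimes$ generated by $X_{12}$ and $X_{03}$ (respectively by $X_{23}$ and $X_{01}$; by $X_{31}$ and $X_{02}$). Then $\mathfrak g_\boxtimes=\Omega+\Omega'+\Omega''$.
   Context: The Tetrahedron algebra $\mathfrak g_\boxtimes$ is the Lie algebra over $k$ with generators $X_{ij}$ ($i,j\in\{0,1,2,3\}$, $i\neq j$) and relations $X_{ij}+X_{ji}=0$ for $i\neq j$; $[X_{ij},X_{jk}]=2(X_{ij}+X_{jk})$ for mutually distinct $i,j,k$; $[X_{hi},[X_{hi},[X_{hi},X_{jk}]]]=4[X_{hi},X_{jk}]$ for mutually distinct $h,i,j,k$. *)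

From HB Require Import structures.
From mathcomp Require Import all_boot all_algebra.
Set Implicit Arguments. Unset Strict Implicit. Unset Printing Implicit Defensive.
Import GRing.Theory.
Local Open Scope ring_scope.

Definition is_lie_bracket (k : fieldType) (V : lmodType k) (br : V -> V -> V) : Prop :=
  [/\ (forall (a : k) (x y z : V), br (a *: x + y) z = a *: br x z + br y z),
      (forall (a : k) (x y z : V), br x (a *: y + z) = a *: br x y + br x z),
      (forall x : V, br x x = 0)
    & (forall x y z : V, br x (br y z) + br y (br z x) + br z (br x y) = 0)].

Definition is_lie_hom (k : fieldType) (V W : lmodType k)
    (brV : V -> V -> V) (brW : W -> W -> W) (f : V -> W) : Prop :=
  (forall (a : k) (x y : V), f (a *: x + y) = a *: f x + f y) /\
  (forall x y : V, f (brV x y) = brW (f x) (f y)).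

(* The defining relations of the Tetrahedron algebra, for a family
   X i j (i <> j) of elements indexed by {0,1,2,3} = 'I_4 (the diagonal
   values X i i play no role). *)
Definition tet_relations (k : fieldType) (V : lmodType k)
    (br : V -> V -> V) (X : 'I_4 -> 'I_4 -> V) : Prop :=
  [/\ (forall i j : 'I_4, i != j -> X i j + X j i = 0),
      (forall i j l : 'I_4, i != j -> j != l -> i != l ->
          br (X i j) (X j l) = 2%:R *: (X i j + X j l))
    & (forall h i j l : 'I_4, h != i -> h != j -> h != l -> i != j -> i != l -> j != l ->
          br (X h i) (br (X h i) (br (X h i) (X j l))) = 4%:R *: br (X h i) (X j l))].

(* (V, br, X) is the Tetrahedron algebra over k: the Lie algebra presented by
   the generators X i j and the relations above, i.e. the universal
   (initial) Lie algebra with such a family satisfying the relations. *)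
Definition is_tetrahedron_algebra (k : fieldType) (V : lmodType k)
    (br : V -> V -> V) (X : 'I_4 -> 'I_4 -> V) : Prop :=
  [/\ is_lie_bracket br, tet_relations br X &
      forall (W : lmodType k) (brW : W -> W -> W) (Y : 'I_4 -> 'I_4 -> W),
        is_lie_bracket brW -> tet_relations brW Y ->
        exists f : V -> W,
          [/\ is_lie_hom br brW f,
              (forall i j : 'I_4, i != j -> f (X i j) = Y i j) &
              (forall g : V -> W, is_lie_hom br brW g ->
                 (forall i j : 'I_4, i != j -> g (X i j) = Y i j) ->
                 forall v, g v = f v)]].

Definition in_lie_subalg (k : fieldType) (V : lmodType k)
    (br : V -> V -> V) (a b : V) (v : V) : Prop :=
  forall P : V -> Prop,
    P a -> P b -> P 0 ->
    (forall x y, P x -> P y -> P (x + y)) ->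
    (forall (c : k) x, P x -> P (c *: x)) ->
    (forall x y, P x -> P y -> P (br x y)) ->
    P v.

Definition o0 : 'I_4 := @Ordinal 4 0 isT.
Definition o1 : 'I_4 := @Ordinal 4 1 isT.
Definition o2 : 'I_4 := @Ordinal 4 2 isT.
Definition o3 : 'I_4 := @Ordinal 4 3 isT.

From HB Require Import structures.
From mathcomp Require Import all_boot all_algebra.
From mathcomp Require Import boolp.
Set Implicit Arguments. Unset Strict Implicit. Unset Printing Implicit Defensive.
Import GRing.Theory.
Local Open Scope ring_scope.

(* Let Om be the subalgebra generated by two opposite edges X_ab, X_cd of the
   tetrahedron. Any other edge X_ij shares exactly one vertex with each of them,
   so the relation [X_ij, X_jl] = 2 (X_ij + X_jl) puts [X_ij, X_ab] and
   [X_ij, X_cd] in the span of X_ij and the generator, whence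
   [X_ij, Om] is contained in Om + k X_ij. As the three pairs of opposite
   edges cover all edges, Om + Om' + Om'' is a subspace containing every X_ij
   and stable under every ad X_ij, so it contains the Lie subalgebra generated
   by the X_ij, which is the whole algebra by its universal property. *)

Section LieAlgebra.
Variables (k : fieldType) (V : lmodType k) (br : V -> V -> V).
Hypothesis br_lie : is_lie_bracket br.

Lemma bracketDl x y z : br (x + y) z = br x z + br y z.
Proof. by case: br_lie => D _ _ _; have := D 1 x y z; rewrite !scale1r. Qed.

Lemma bracketDr x y z : br x (y + z) = br x y + br x z.
Proof. by case: br_lie => _ D _ _; have := D 1 x y z; rewrite !scale1r. Qed.

Lemma bracket0l z : br 0 z = 0.
Proof. by apply: (addrI (br 0 z)); rewrite addr0 -bracketDl addr0. Qed.

Lemma bracket0r z : br z 0 = 0.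
Proof. by apply: (addrI (br z 0)); rewrite addr0 -bracketDr addr0. Qed.

Lemma bracketZl (a : k) x z : br (a *: x) z = a *: br x z.
Proof.
by case: br_lie => D _ _ _; rewrite -[a *: x]addr0 D bracket0l addr0.
Qed.

Lemma bracketZr (a : k) x z : br x (a *: z) = a *: br x z.
Proof.
by case: br_lie => _ D _ _; rewrite -[a *: z]addr0 D bracket0r addr0.
Qed.

Lemma bracketNl x z : br (- x) z = - br x z.
Proof. by rewrite -scaleN1r bracketZl scaleN1r. Qed.

Lemma bracketNr x z : br x (- z) = - br x z.
Proof. by rewrite -scaleN1r bracketZr scaleN1r. Qed.

Lemma bracket_anti x y : br y x = - br x y.
Proof.
case: br_lie => _ _ brxx _; apply/eqP; rewrite -addr_eq0 addrC.
by have := brxx (x + y); rewrite bracketDl !bracketDr !brxx add0r addr0 => ->.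
Qed.

Lemma bracket_leibniz g x y : br g (br x y) = br (br g x) y + br x (br g y).
Proof.
case: br_lie => _ _ _ jacobi; have := jacobi g x y.
rewrite [br y g]bracket_anti bracketNr [br y _]bracket_anti -addrA -opprD.
by move/eqP; rewrite subr_eq0 addrC => /eqP.
Qed.

Definition bracket_in_span (g p : V) : Prop :=
  exists a b : k, br g p = a *: g + b *: p.

Lemma bracket_in_span_sym g p : bracket_in_span g p -> bracket_in_span p g.
Proof.
case=> a [b e]; exists (- b), (- a).
by rewrite bracket_anti e opprD addrC !scaleNr.
Qed.

Lemma bracket_in_spanNl g p : bracket_in_span g p -> bracket_in_span (- g) p.
Proof.
case=> a [b e]; exists a, (- b).
by rewrite bracketNl e opprD scaleNr scalerN.
Qed.

Lemma bracket_in_spanNr g p : bracket_in_span g p -> bracket_in_span g (- p).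
Proof. by move=> /bracket_in_span_sym/bracket_in_spanNl/bracket_in_span_sym. Qed.

Record subspace (P : V -> Prop) : Prop := Subspace {
  subspace0 : P 0;
  subspaceD : forall x y, P x -> P y -> P (x + y);
  subspaceZ : forall (c : k) x, P x -> P (c *: x) }.

Record lie_closed (P : V -> Prop) : Prop := LieClosed {
  lie_closed_subspace : subspace P;
  lie_closedB : forall x y, P x -> P y -> P (br x y) }.

Definition lie_closure (G : V -> Prop) (v : V) : Prop :=
  forall P, lie_closed P -> (forall g, G g -> P g) -> P v.

Definition pair_set (a b : V) (g : V) : Prop := g = a \/ g = b.

Lemma in_lie_subalgE a b v : in_lie_subalg br a b v <-> lie_closure (pair_set a b) v.
Proof.
split=> [hv P [[P0 PD PZ] PB] PG | hv P Pa Pb P0 PD PZ PB].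
  by apply: hv => //; apply: PG; [left | right].
by apply: hv => [|g [] ->] //; do !split.
Qed.

Definition add_line (P : V -> Prop) (g v : V) : Prop :=
  exists2 u, P u & exists c : k, v = u + c *: g.

Lemma add_line_subspace P g : subspace P -> subspace (add_line P g).
Proof.
case=> P0 PD PZ; split.
- by exists 0 => //; exists 0; rewrite scale0r addr0.
- move=> _ _ [u Pu [c ->]] [u' Pu' [c' ->]]; exists (u + u'); first exact: PD.
  by exists (c + c'); rewrite scalerDl addrACA.
- move=> a _ [u Pu [c ->]]; exists (a *: u); first exact: PZ.
  by exists (a * c); rewrite scalerDr scalerA.
Qed.

Lemma add_line_l P g v : P v -> add_line P g v.
Proof. by move=> Pv; exists v => //; exists 0; rewrite scale0r addr0. Qed.

Lemma add_line_r P g : P 0 -> add_line P g g.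
Proof. by move=> P0; exists 0 => //; exists 1; rewrite add0r scale1r. Qed.

Section Generators.
Variable G : V -> Prop.

Lemma lie_closure_gen g : G g -> lie_closure G g.
Proof. by move=> Gg P _; apply. Qed.

Lemma lie_closure_closed : lie_closed (lie_closure G).
Proof.
split; first split.
- by move=> P hP _; exact: subspace0 (lie_closed_subspace hP).
- move=> x y hx hy P hP hG.
  exact: subspaceD (lie_closed_subspace hP) _ _ (hx P hP hG) (hy P hP hG).
- move=> c x hx P hP hG.
  exact: subspaceZ (lie_closed_subspace hP) _ _ (hx P hP hG).
- move=> x y hx hy P hP hG.
  exact: lie_closedB hP _ _ (hx P hP hG) (hy P hP hG).
Qed.

Lemma lie_closure_subspace : subspace (lie_closure G).
Proof. by case: lie_closure_closed. Qed.

Lemma lie_closureB x y : lie_closure G x -> lie_closure G y -> lie_closure G (br x y).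
Proof. by case: lie_closure_closed => _; apply. Qed.

Lemma bracket_lie_closure_add_line g :
    (forall p, G p -> bracket_in_span g p) ->
  forall w, lie_closure G w -> add_line (lie_closure G) g (br g w).
Proof.
move=> g_span w hw.
have LS := lie_closure_subspace.
have [L0 LD LZ] := LS; have [_ MD MZ] := add_line_subspace g LS.
have ML v : lie_closure G v -> add_line (lie_closure G) g v.
  exact: add_line_l.
pose Q w := lie_closure G w /\ add_line (lie_closure G) g (br g w).
suff [] : Q w by [].
apply: hw => [|p Gp]; last first.
  have Lp := lie_closure_gen Gp; split=> //.
  have [a [b ->]] := g_span p Gp.
  by apply: MD; apply: MZ; [exact: add_line_r | exact: ML].
split; first split.
- by split=> //; rewrite bracket0r; exact: ML.
- move=> x y [Lx Mx] [Ly My]; split; first exact: LD.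
  by rewrite bracketDr; exact: MD.
- move=> c x [Lx Mx]; split; first exact: LZ.
  by rewrite bracketZr; exact: MZ.
move=> x y [Lx Mx] [Ly My]; split; first exact: lie_closureB.
have [u Lu [c egx]] := Mx; have [u' Lu' [c' egy]] := My.
rewrite bracket_leibniz egx egy bracketDl bracketDr bracketZl bracketZr.
rewrite [br x g]bracket_anti scalerN -scaleNr.
by apply: (MD); (apply: (MD); [apply: (ML); exact: lie_closureB | exact: (MZ)]).
Qed.

Lemma lie_closure_sub_ad_stable S : subspace S -> (forall g, G g -> S g) ->
    (forall g s, G g -> S s -> S (br g s)) ->
  forall v, lie_closure G v -> S v.
Proof.
case=> S0 SD SZ GS adS v hv.
pose Q w := S w /\ forall s, S s -> S (br w s).
suff [] : Q v by [].
apply: hv => [|g Gg]; last by split=> [|s]; [exact: GS | exact: adS].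
split; first split.
- by split=> // s _; rewrite bracket0l.
- move=> x y [Sx adx] [Sy ady]; split; first exact: SD.
  by move=> s Ss; rewrite bracketDl; apply: SD; [exact: adx | exact: ady].
- move=> c x [Sx adx]; split; first exact: SZ.
  by move=> s Ss; rewrite bracketZl; apply: SZ; exact: adx.
move=> x y [Sx adx] [Sy ady]; split; first exact: adx.
move=> s Ss; have -> : br (br x y) s = br x (br y s) + (-1) *: br y (br x s).
  by rewrite bracket_leibniz scaleN1r addrK.
by apply: SD; [apply: adx; exact: ady | apply: SZ; apply: ady; exact: adx].
Qed.

End Generators.

End LieAlgebra.

Section Sum3.
Variables (k : fieldType) (V : lmodType k) (br : V -> V -> V).
Variables P Q R : V -> Prop.
Hypotheses (P_sub : subspace P) (Q_sub : subspace Q) (R_sub : subspace R).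

Definition sum3 (v : V) : Prop :=
  exists u u' u'', [/\ P u, Q u', R u'' & v = u + u' + u''].

Lemma sum3_subspace : subspace sum3.
Proof.
case: P_sub Q_sub R_sub => [P0 PD PZ] [Q0 QD QZ] [R0 RD RZ]; split.
- by exists 0, 0, 0; rewrite !addr0.
- move=> _ _ [u [u' [u'' [Pu Qu' Ru'' ->]]]] [w [w' [w'' [Pw Qw' Rw'' ->]]]].
  exists (u + w), (u' + w'), (u'' + w''); split; [exact: PD | exact: QD | exact: RD |].
  by rewrite addrACA (addrACA u).
- move=> c _ [u [u' [u'' [Pu Qu' Ru'' ->]]]].
  exists (c *: u), (c *: u'), (c *: u''); split; [exact: PZ | exact: QZ | exact: RZ |].
  by rewrite !scalerDr.
Qed.

Lemma sum3l u : P u -> sum3 u.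
Proof.
by move=> Pu; exists u, 0, 0; rewrite !addr0; split=> //; [case: Q_sub | case: R_sub].
Qed.

Lemma sum3m u : Q u -> sum3 u.
Proof.
move=> Qu; exists 0, u, 0; rewrite add0r addr0.
by split=> //; [case: P_sub | case: R_sub].
Qed.

Lemma sum3r u : R u -> sum3 u.
Proof.
by move=> Ru; exists 0, 0, u; rewrite !add0r; split=> //; [case: P_sub | case: Q_sub].
Qed.

Hypothesis br_lie : is_lie_bracket br.

Lemma sum3_ad_stable g : sum3 g ->
    (forall u, P u -> add_line P g (br g u)) ->
    (forall u, Q u -> add_line Q g (br g u)) ->
    (forall u, R u -> add_line R g (br g u)) ->
  forall s, sum3 s -> sum3 (br g s).
Proof.
move=> Sg adP adQ adR _ [u [u' [u'' [Pu Qu' Ru'' ->]]]].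
have [_ SD SZ] := sum3_subspace.
have in_sum3 (T : V -> Prop) v : (forall t, T t -> sum3 t) -> add_line T g v -> sum3 v.
  by move=> TS [t Tt [c ->]]; apply: (SD); [exact: TS | exact: SZ].
rewrite !(bracketDr br_lie); apply: (SD); first apply: (SD).
- exact: in_sum3 sum3l (adP u Pu).
- exact: in_sum3 sum3m (adQ u' Qu').
- exact: in_sum3 sum3r (adR u'' Ru'').
Qed.

End Sum3.

Definition same_edge (i j a b : 'I_4) : bool :=
  ((i == a) && (j == b)) || ((i == b) && (j == a)).

Definition adjacent_edges (i j a b : 'I_4) : bool :=
  [&& i != j, a != b, [|| i == a, i == b, j == a | j == b] & ~~ same_edge i j a b].

Lemma edge_opposite_or_adjacent (a b c d i j : 'I_4) :
  uniq [:: a; b; c; d] -> i != j ->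
  [|| same_edge i j a b, same_edge i j c d |
      adjacent_edges i j a b && adjacent_edges i j c d].
Proof. by move: a b c d i j; do 6!case=> [[|[|[|[|?]]]] ?] //. Qed.

Lemma edge_in_opposite_pairs (i j : 'I_4) : i != j ->
  [|| same_edge i j o1 o2 || same_edge i j o0 o3,
      same_edge i j o2 o3 || same_edge i j o0 o1 |
      same_edge i j o3 o1 || same_edge i j o0 o2].
Proof. by move: i j; do 2!case=> [[|[|[|[|?]]]] ?] //. Qed.

Section TetrahedronRelations.
Variables (k : fieldType) (V : lmodType k) (br : V -> V -> V) (X : 'I_4 -> 'I_4 -> V).
Hypotheses (br_lie : is_lie_bracket br) (X_rel : tet_relations br X).

Lemma tet_anti i j : i != j -> X j i = - X i j.
Proof.
by case: X_rel => X_anti _ _ ij; apply/eqP; rewrite -addr_eq0 addrC X_anti.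
Qed.

Lemma tet_bracket_in_span i j a b :
  adjacent_edges i j a b -> bracket_in_span br (X i j) (X a b).
Proof.
case: X_rel => _ X_br _ /and4P [ij ab shared not_same].
have chain u w z : u != w -> w != z -> u != z -> bracket_in_span br (X u w) (X w z).
  by move=> uw wz uz; exists 2%:R, 2%:R; rewrite X_br // scalerDr.
case/or4P: shared => /eqP e; subst.
- have jb : j != b.
    by apply: contraNneq not_same => ->; rewrite /same_edge !eqxx ?orbT.
  rewrite -[X a j]opprK -tet_anti //; apply: bracket_in_spanNl => //.
  by apply: chain; rewrite // eq_sym.
- have aj : a != j.
    by apply: contraNneq not_same => ->; rewrite /same_edge !eqxx ?orbT.
  by apply: bracket_in_span_sym => //; apply: chain.
- have ib : i != b.
    by apply: contraNneq not_same => ->; rewrite /same_edge !eqxx ?orbT.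
  exact: chain.
- have ia : i != a.
    by apply: contraNneq not_same => ->; rewrite /same_edge !eqxx ?orbT.
  rewrite [X a b]tet_anti 1?eq_sym //; apply: bracket_in_spanNr => //.
  by apply: chain; rewrite // eq_sym.
Qed.

Lemma tet_same_edge_in_closure a b c d i j : a != b -> c != d ->
  same_edge i j a b || same_edge i j c d ->
  lie_closure br (pair_set (X a b) (X c d)) (X i j).
Proof.
move=> ab cd; have [_ _ LZ] := lie_closure_subspace br (pair_set (X a b) (X c d)).
have Lab := @lie_closure_gen _ _ br (pair_set (X a b) (X c d)) _ (or_introl erefl).
have Lcd := @lie_closure_gen _ _ br (pair_set (X a b) (X c d)) _ (or_intror erefl).
case/orP=> /orP [] /andP [/eqP -> /eqP ->] //.
- by rewrite [X b a]tet_anti // -scaleN1r; apply: LZ.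
- by rewrite [X d c]tet_anti // -scaleN1r; apply: LZ.
Qed.

Lemma bracket_tet_opposite_pair a b c d i j w :
    uniq [:: a; b; c; d] -> i != j ->
    lie_closure br (pair_set (X a b) (X c d)) w ->
  add_line (lie_closure br (pair_set (X a b) (X c d))) (X i j) (br (X i j) w).
Proof.
move=> abcd ij hw.
have /andP [ab cd] : (a != b) && (c != d).
  by move: abcd; rewrite /= !inE; case: (a == b); case: (c == d); rewrite ?andbF.
case/or3P: (edge_opposite_or_adjacent abcd ij) => [own | own | /andP [adj1 adj2]].
- apply: add_line_l; apply: lie_closureB hw.
  by apply: tet_same_edge_in_closure; rewrite ?own.
- apply: add_line_l; apply: lie_closureB hw.
  by apply: tet_same_edge_in_closure; rewrite ?own ?orbT.
- apply: bracket_lie_closure_add_line => // p [] ->; exact: tet_bracket_in_span.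
Qed.

Definition opposite_pairs_sum : V -> Prop :=
  sum3 (lie_closure br (pair_set (X o1 o2) (X o0 o3)))
       (lie_closure br (pair_set (X o2 o3) (X o0 o1)))
       (lie_closure br (pair_set (X o3 o1) (X o0 o2))).

Lemma opposite_pairs_sum_subspace : subspace opposite_pairs_sum.
Proof. by apply: sum3_subspace; exact: lie_closure_subspace. Qed.

Lemma opposite_pairs_sum_edge i j : i != j -> opposite_pairs_sum (X i j).
Proof.
move=> ij; case/or3P: (edge_in_opposite_pairs ij) => own.
- by apply: sum3l; try exact: lie_closure_subspace; exact: tet_same_edge_in_closure.
- by apply: sum3m; try exact: lie_closure_subspace; exact: tet_same_edge_in_closure.
- by apply: sum3r; try exact: lie_closure_subspace; exact: tet_same_edge_in_closure.
Qed.

Lemma opposite_pairs_sum_ad_stable i j s : i != j ->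
  opposite_pairs_sum s -> opposite_pairs_sum (br (X i j) s).
Proof.
move=> ij; have L_sub := lie_closure_subspace br.
apply: (sum3_ad_stable (L_sub _) (L_sub _) (L_sub _) br_lie (opposite_pairs_sum_edge ij))
  => w; exact: bracket_tet_opposite_pair.
Qed.

End TetrahedronRelations.

Section ClosureLieAlgebra.
Variables (k : fieldType) (V : lmodType k) (br : V -> V -> V) (G : V -> Prop).

Definition closure_pred : {pred V} := fun v => `[< lie_closure br G v >].

Fact closure_submod_closed : submod_closed closure_pred.
Proof.
have [L0 LD LZ] := lie_closure_subspace br G.
split=> [|c u v /asboolP Lu /asboolP Lv]; apply/asboolP; first exact: L0.
by apply: LD => //; apply: LZ.
Qed.

HB.instance Definition _ :=
  GRing.isSubmodClosed.Build k V closure_pred closure_submod_closed.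

Definition closure_type := {v : V | v \in closure_pred}.
HB.instance Definition _ := Choice.copy closure_type {v : V | v \in closure_pred}.
HB.instance Definition _ := SubType.copy closure_type {v : V | v \in closure_pred}.
HB.instance Definition _ := [SubChoice_isSubLmodule of closure_type by <:].

Lemma closure_typeP (u : closure_type) : lie_closure br G (val u).
Proof. exact/asboolP/(valP u). Qed.

Definition closure_br (u v : closure_type) : closure_type :=
  exist _ (br (val u) (val v))
    (asboolT (lie_closureB (closure_typeP u) (closure_typeP v))).

Lemma closure_br_lie : is_lie_bracket br -> is_lie_bracket closure_br.
Proof.
case=> LD RD brxx jacobi; split=> *; apply: val_inj => /=;
  [exact: LD | exact: RD | exact: brxx | exact: jacobi].
Qed.

End ClosureLieAlgebra.

Definition tet_edges (k : fieldType) (V : lmodType k) (X : 'I_4 -> 'I_4 -> V) (v : V) :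
    Prop :=
  exists i j, i != j /\ v = X i j.

Lemma tetrahedron_generated (k : fieldType) (V : lmodType k) (br : V -> V -> V)
    (X : 'I_4 -> 'I_4 -> V) :
  is_tetrahedron_algebra br X -> forall v, lie_closure br (tet_edges X) v.
Proof.
case=> br_lie X_rel univ v.
pose W := closure_type br (tet_edges X).
pose Y i j : W := insubd 0 (X i j).
have valY i j : i != j -> val (Y i j) = X i j.
  move=> ij; rewrite insubdK //; apply/asboolP.
  by apply: lie_closure_gen; exists i, j.
have Y_rel : tet_relations (@closure_br _ _ br _) Y.
  case: X_rel => R1 R2 R3; split=> [i j ij | i j l ij jl il | h i j l hi hj hl ij il jl];
    apply: val_inj; rewrite /= !valY; try by rewrite // eq_sym.
  - exact: R1.
  - exact: R2.
  - exact: R3.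
have [f [[f_lin f_br] fX _]] := univ W _ Y (closure_br_lie (tet_edges X) br_lie) Y_rel.
have [f0 [_ _ f_unique]] := univ V br X br_lie X_rel.
have f0_id w : w = f0 w by apply: (f_unique id).
have f0_f w : val (f w) = f0 w.
  apply: (f_unique (val \o f)); first split=> [a x y | x y] /=.
  - by rewrite f_lin.
  - by rewrite f_br.
  - by move=> i j ij /=; rewrite fX // valY.
by rewrite (f0_id v) -f0_f; exact: closure_typeP.
Qed.

Theorem proposition1p5 (k : fieldType) (V : lmodType k)
    (br : V -> V -> V) (X : 'I_4 -> 'I_4 -> V) :
  (2%:R : k) != 0 ->
  is_tetrahedron_algebra br X ->
  forall v : V, exists u u' u'' : V,
    [/\ in_lie_subalg br (X o1 o2) (X o0 o3) u,
        in_lie_subalg br (X o2 o3) (X o0 o1) u',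
        in_lie_subalg br (X o3 o1) (X o0 o2) u''
      & v = u + u' + u''].
Proof.
move=> _ tetX v; have [br_lie X_rel _] := tetX.
have [u [u' [u'' [hu hu' hu'' ->]]]] : opposite_pairs_sum br X v.
  apply: (lie_closure_sub_ad_stable br_lie (opposite_pairs_sum_subspace br X) _ _
    (tetrahedron_generated tetX v)).
  - by move=> _ [i [j [ij ->]]]; exact: opposite_pairs_sum_edge X_rel _ _ ij.
  - move=> _ s [i [j [ij ->]]].
    exact: opposite_pairs_sum_ad_stable br_lie X_rel _ _ _ ij.
by exists u, u', u''; split=> //; apply/in_lie_subalgE.
Qed.
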